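(* Let $n\geq 3$ be an odd integer and define $$\phi(x)=\frac{5}{4}\sin(x)+\sum_{k=2}^{n-1}\sin(kx)+\frac{2n-3}{4n}\sin(nx).$$ Then $\phi(x)\geq 0$ for all $x\in[0,\pi]$. *)

From Stdlib Require Import Reals.
Open Scope R_scope.

(* sum_{k=a}^{b} f k  (empty when b < a), defined as sum over k = a .. a+m-1 *)
Fixpoint sum_range (f : nat -> R) (a m : nat) : R :=
  match m with
  | O => 0
  | S m' => f a + sum_range f (S a) m'
  end.

Definition phi (n : nat) (x : R) : R :=
  5/4 * sin x
  + sum_range (fun k => sin (INR k * x)) 2 (n - 2)
  + (2 * INR n - 3) / (4 * INR n) * sin (INR n * x).

From Stdlib Require Import Reals Lra Lia Psatz.
Open Scope R_scope.

(* Put t = x/2 and e = PI/2 - t.  Since 2 sin t sin (k x) = cos ((k - 1/2) x) - cos ((k + 1/2) x),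
   the sum in phi telescopes, and for odd n the identity n t = m PI + (PI/2 - n e) turns
   2 n sin t phi(x) into
     G(e) = S cos e ^2 + 2 S cos (n e) ^2 - 3 sin (n e) cos e cos (n e),   S = n sin e.
   As a quadratic form in (cos e, cos (n e)) this is nonnegative once 9 sin (n e) ^2 <= 8 S ^2,
   which holds unless e and n e are both small; there G is bounded below through the Taylor
   polynomials of sin and cos. *)

Lemma sin_lb_expand a : sin_lb a = a - a^3/6 + a^5/120 - a^7/5040.
Proof.
  unfold sin_lb, sin_approx, sin_term; cbn [sum_f_R0 Nat.mul Nat.add]; cbv [Factorial.fact].
  rewrite !mult_INR; simpl INR; field.
Qed.

Lemma sin_ub_expand a : sin_ub a = a - a^3/6 + a^5/120 - a^7/5040 + a^9/362880.
Proof.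
  unfold sin_ub, sin_approx, sin_term; cbn [sum_f_R0 Nat.mul Nat.add]; cbv [Factorial.fact].
  rewrite !mult_INR; simpl INR; field.
Qed.

Lemma cos_lb_expand a : cos_lb a = 1 - a^2/2 + a^4/24 - a^6/720.
Proof.
  unfold cos_lb, cos_approx, cos_term; cbn [sum_f_R0 Nat.mul Nat.add]; cbv [Factorial.fact].
  rewrite !mult_INR; simpl INR; field.
Qed.

Lemma cos_ub_expand a : cos_ub a = 1 - a^2/2 + a^4/24 - a^6/720 + a^8/40320.
Proof.
  unfold cos_ub, cos_approx, cos_term; cbn [sum_f_R0 Nat.mul Nat.add]; cbv [Factorial.fact].
  rewrite !mult_INR; simpl INR; field.
Qed.

Lemma sin_ge_taylor3 a : 0 <= a -> a <= PI -> a - a^3/6 <= sin a.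
Proof.
  intros ha0 haPI; destruct (SIN a ha0 haPI) as [hlb _]; rewrite sin_lb_expand in hlb.
  pose proof PI_4.
  assert (a * a <= 16) by nra.
  assert (0 <= a^5) by (apply pow_le; lra).
  assert (a^7 = a^5 * (a * a)) by field.
  nra.
Qed.

Lemma sin_le_taylor5 a : 0 <= a -> a <= PI -> sin a <= a - a^3/6 + a^5/120.
Proof.
  intros ha0 haPI; destruct (SIN a ha0 haPI) as [_ hub]; rewrite sin_ub_expand in hub.
  pose proof PI_4.
  assert (a * a <= 16) by nra.
  assert (0 <= a^7) by (apply pow_le; lra).
  assert (a^9 = a^7 * (a * a)) by field.
  nra.
Qed.

Lemma cos_ge_taylor6 a : 0 <= a -> a <= PI/2 -> 1 - a^2/2 + a^4/24 - a^6/720 <= cos a.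
Proof.
  intros ha0 ha1; pose proof PI_RGT_0.
  destruct (COS a ltac:(lra) ha1) as [hlb _]; rewrite cos_lb_expand in hlb; exact hlb.
Qed.

Lemma cos_le_taylor4 a : 0 <= a -> a <= PI/2 -> cos a <= 1 - a^2/2 + a^4/24.
Proof.
  intros ha0 ha1; pose proof PI_RGT_0.
  destruct (COS a ltac:(lra) ha1) as [_ hub]; rewrite cos_ub_expand in hub.
  pose proof PI_4.
  assert (a * a <= 4) by nra.
  assert (0 <= a^6) by (apply pow_le; lra).
  assert (a^8 = a^6 * (a * a)) by field.
  nra.
Qed.

Lemma quad_form_nonneg S T a b :
  0 < S -> 9 * T^2 <= 8 * S^2 -> 0 <= S * a^2 + 2 * S * b^2 - 3 * T * a * b.
Proof.
  intros hS hT.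
  assert (hsq : S * (S * a^2 + 2 * S * b^2 - 3 * T * a * b)
                = (S * a - 3/2 * T * b)^2 + (2 * S^2 - 9/4 * T^2) * b^2) by field.
  assert (0 <= (S * a - 3/2 * T * b)^2) by apply pow2_ge_0.
  assert (0 <= (2 * S^2 - 9/4 * T^2) * b^2) by (apply Rmult_le_pos; [lra | apply pow2_ge_0]).
  apply Rmult_le_reg_l with S; [exact hS |]; lra.
Qed.

Definition phi_kernel (N e : R) : R :=
  N * sin e * (cos e ^2 + 2 * cos (N * e) ^2) - 3 * cos e * sin (N * e) * cos (N * e).

Lemma phi_kernel_nonneg_of_sin_bound N e :
  0 < N * sin e -> 9 * sin (N * e) ^2 <= 8 * (N * sin e) ^2 -> 0 <= phi_kernel N e.
Proof.
  intros hS hT; unfold phi_kernel.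
  replace (N * sin e * (cos e ^2 + 2 * cos (N * e) ^2) - 3 * cos e * sin (N * e) * cos (N * e))
    with ((N * sin e) * cos e ^2 + 2 * (N * sin e) * cos (N * e) ^2
          - 3 * sin (N * e) * cos e * cos (N * e)) by field.
  exact (quad_form_nonneg _ _ _ _ hS hT).
Qed.

Lemma phi_kernel_nonneg_large N e :
  3 <= N -> 37/100 <= e -> e <= PI/2 -> 0 <= phi_kernel N e.
Proof.
  intros hN he0 he1; pose proof PI2_1.
  assert (sin (37/100) <= sin e) by (apply sin_incr_1; lra).
  assert (37/100 - (37/100)^3/6 <= sin (37/100)) by (apply sin_ge_taylor3; lra).
  assert (hS : 1 <= N * sin e) by nra.
  assert (sin (N * e) ^2 <= 1) by (pose proof (sin2_cos2 (N * e)); unfold Rsqr in *; nra).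
  apply phi_kernel_nonneg_of_sin_bound; nra.
Qed.

Lemma phi_kernel_nonneg_middle N e :
  3 <= N -> 0 <= e -> e < 37/100 -> 75/100 <= N * e -> 0 <= phi_kernel N e.
Proof.
  intros hN he0 he1 hd; pose proof PI2_1; pose proof PI2_3_2.
  set (d := N * e) in *.
  assert (e - e^3/6 <= sin e) by (apply sin_ge_taylor3; lra).
  assert (977/1000 * e <= sin e) by nra.
  assert (hS : 977/1000 * d <= N * sin e) by (unfold d; nra).
  assert (sin d ^2 <= 1) by (pose proof (sin2_cos2 d); unfold Rsqr in *; nra).
  destruct (Rle_or_lt (11/10) d) as [hd1 | hd1].
  { apply phi_kernel_nonneg_of_sin_bound; unfold d in *; nra. }
  assert (hsin : sin d <= 91/100 * d).
  { assert (d - d^3/6 + d^5/120 = d * (1 - (d^2/6 - d^4/120))) by field.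
    assert (sin d <= d - d^3/6 + d^5/120) by (apply sin_le_taylor5; lra).
    assert (0 <= (d^2 - 9/16) * (121/100 - d^2)) by (apply Rmult_le_pos; nra).
    assert (d^2/6 - d^4/120 >= 9/100) by (replace (d^4) with (d^2 * d^2) by field; nra).
    nra. }
  assert (0 <= sin d) by (apply sin_ge_0; lra).
  apply phi_kernel_nonneg_of_sin_bound; unfold d in *; nra.
Qed.

Lemma phi_kernel_double_angle N e :
  phi_kernel N e
  = N * sin e * (cos e ^2 + 1 + cos (2 * (N * e))) - 3/2 * cos e * sin (2 * (N * e)).
Proof. unfold phi_kernel; rewrite cos_2a_cos, sin_2a; field. Qed.

Lemma small_angle_poly_nonneg y u :
  0 <= y -> y <= 3/2 -> 0 <= u -> u <= y^2/36 ->
  0 <= y * (1 - u/6) * (2 - u + (1 - y^2/2 + y^4/24 - y^6/720))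
       - 3 * (1 - u/2 + u^2/24) * (y - y^3/6 + y^5/120).
Proof.
  intros hy0 hy1 hu0 hu1.
  set (s := y - y^3/6 + y^5/120).
  replace (y * (1 - u/6) * (2 - u + (1 - y^2/2 + y^4/24 - y^6/720)) - 3 * (1 - u/2 + u^2/24) * s)
    with ((y^5/60 - y^7/720) + u * (- y^3/6 + y^5/180 + y^7/4320) + u^2 * (y/6 - s/8))
    by (unfold s; field).
  assert (hy2 : y^2 <= 9/4) by nra.
  assert (0 <= y^3) by (apply pow_le; lra).
  assert (0 <= y^5) by (apply pow_le; lra).
  assert (0 <= y^7) by (apply pow_le; lra).
  assert (y^3 = y * y^2) by field.
  assert (y^5 = y^3 * y^2) by field.
  assert (y^7 = y^5 * y^2) by field.
  assert (s <= 4/3 * y) by (unfold s; nra).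
  assert (0 <= u^2 * (y/6 - s/8)) by (apply Rmult_le_pos; [apply pow2_ge_0 | lra]).
  assert (u * (- y^3/6 + y^5/180 + y^7/4320) >= - (y^2/36) * y^3/6) by nra.
  nra.
Qed.

Lemma phi_kernel_nonneg_small N e :
  3 <= N -> 0 <= e -> e < 37/100 -> N * e < 75/100 -> 0 <= phi_kernel N e.
Proof.
  intros hN he0 he1 hd; pose proof PI2_1; pose proof PI2_3_2.
  rewrite phi_kernel_double_angle.
  set (y := 2 * (N * e)).
  assert (hy0 : 0 <= y) by (unfold y; nra).
  assert (hy1 : y <= 3/2) by (unfold y; lra).
  assert (3 * e <= N * e) by nra.
  assert (hu : e^2 <= y^2/36) by (unfold y; nra).
  assert (e - e^3/6 <= sin e) by (apply sin_ge_taylor3; lra).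
  assert (hS : y/2 * (1 - e^2/6) <= N * sin e) by (unfold y; nra).
  assert (1 - e^2/2 + e^4/24 - e^6/720 <= cos e) by (apply cos_ge_taylor6; lra).
  assert (1 - e^2/2 <= cos e).
  { assert (0 <= e^4) by (apply pow_le; lra).
    assert (e^2 <= 1/16) by nra.
    assert (e^6 = e^4 * e^2) by field.
    nra. }
  assert (cos e <= 1 - e^2/2 + e^4/24) by (apply cos_le_taylor4; lra).
  assert (1 - y^2/2 + y^4/24 - y^6/720 <= cos y) by (apply cos_ge_taylor6; lra).
  assert (sin y <= y - y^3/6 + y^5/120) by (apply sin_le_taylor5; lra).
  assert (0 <= sin y) by (apply sin_ge_0; lra).
  assert (hC : 2 - e^2 + (1 - y^2/2 + y^4/24 - y^6/720) <= cos e ^2 + 1 + cos y) by nra.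
  assert (y/2 * (1 - e^2/6) * (2 - e^2 + (1 - y^2/2 + y^4/24 - y^6/720))
          <= N * sin e * (cos e ^2 + 1 + cos y)).
  { apply Rmult_le_compat; [nra | nra | exact hS | exact hC]. }
  assert (cos e * sin y <= (1 - e^2/2 + e^4/24) * (y - y^3/6 + y^5/120)).
  { apply Rmult_le_compat; [nra | lra | lra | lra]. }
  pose proof (small_angle_poly_nonneg y (e^2) hy0 hy1 ltac:(nra) hu).
  nra.
Qed.

Lemma phi_kernel_nonneg N e : 3 <= N -> 0 <= e -> e <= PI/2 -> 0 <= phi_kernel N e.
Proof.
  intros hN he0 he1.
  destruct (Rle_or_lt (37/100) e) as [hlarge | hsmall].
  { exact (phi_kernel_nonneg_large N e hN hlarge he1). }
  destruct (Rle_or_lt (75/100) (N * e)) as [hd | hd].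
  - exact (phi_kernel_nonneg_middle N e hN he0 hsmall hd).
  - exact (phi_kernel_nonneg_small N e hN he0 hsmall hd).
Qed.

Lemma two_sin_half_mul_sin x a :
  2 * sin (x/2) * sin (a * x) = cos ((a - 1/2) * x) - cos ((a + 1/2) * x).
Proof.
  replace ((a - 1/2) * x) with (a * x - x/2) by field.
  replace ((a + 1/2) * x) with (a * x + x/2) by field.
  rewrite cos_minus, cos_plus; field.
Qed.

Lemma two_sin_half_mul_sum_range_sin x m a :
  2 * sin (x/2) * sum_range (fun k => sin (INR k * x)) a m
  = cos ((INR a - 1/2) * x) - cos ((INR a + INR m - 1/2) * x).
Proof.
  revert a; induction m as [|m IH]; intro a; simpl sum_range.
  - simpl INR; replace (INR a + 0 - 1/2) with (INR a - 1/2) by field; field.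
  - rewrite Rmult_plus_distr_l, IH, two_sin_half_mul_sin, !S_INR.
    replace (INR a + 1 - 1/2) with (INR a + 1/2) by field.
    replace (INR a + 1 + INR m - 1/2) with (INR a + (INR m + 1) - 1/2) by field.
    field.
Qed.

Lemma sum_range_sin_0 m a : sum_range (fun k => sin (INR k * 0)) a m = 0.
Proof.
  revert a; induction m as [|m IH]; intro a; simpl; [reflexivity |].
  rewrite IH, Rmult_0_r, sin_0; field.
Qed.

Lemma two_sin_half_mul_phi n x : (2 <= n)%nat ->
  2 * sin (x/2) * phi n x
  = 5/2 * sin (x/2) * sin x + cos (3 * (x/2)) - cos ((2 * INR n - 1) * (x/2))
    + (2 * INR n - 3) / (2 * INR n) * sin (x/2) * sin (INR n * x).
Proof.
  intro hn.
  assert (hN : INR n <> 0) by (apply not_0_INR; lia).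
  unfold phi; rewrite !Rmult_plus_distr_l, two_sin_half_mul_sum_range_sin.
  rewrite minus_INR by exact hn; simpl INR.
  replace ((1 + 1 - 1/2) * x) with (3 * (x/2)) by field.
  replace ((1 + 1 + (INR n - (1 + 1)) - 1/2) * x) with ((2 * INR n - 1) * (x/2)) by field.
  field; exact hN.
Qed.

Lemma sin_add_mult_PI_sqr m z : sin (INR m * PI + z) ^2 = sin z ^2.
Proof.
  induction m as [|m IH]; [simpl INR; rewrite Rmult_0_l, Rplus_0_l; reflexivity |].
  rewrite S_INR; replace ((INR m + 1) * PI + z) with (INR m * PI + z + PI) by field.
  rewrite neg_sin, <- IH; field.
Qed.

Lemma sin_mul_cos_add_mult_PI m z :
  sin (INR m * PI + z) * cos (INR m * PI + z) = sin z * cos z.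
Proof.
  induction m as [|m IH]; [simpl INR; rewrite Rmult_0_l, Rplus_0_l; reflexivity |].
  rewrite S_INR; replace ((INR m + 1) * PI + z) with (INR m * PI + z + PI) by field.
  rewrite neg_sin, neg_cos, <- IH; field.
Qed.

Lemma phi_kernel_identity n x : (3 <= n)%nat -> Nat.Odd n ->
  INR n * (2 * sin (x/2) * phi n x) = phi_kernel (INR n) (PI/2 - x/2).
Proof.
  intros hn [m hm].
  rewrite two_sin_half_mul_phi by lia.
  set (N := INR n); set (t := x/2).
  assert (hN : N <> 0) by (apply not_0_INR; lia).
  replace x with (2 * t) by (unfold t; field).
  assert (hNt : N * t = INR m * PI + (PI/2 - N * (PI/2 - t))).
  { unfold N; rewrite hm, plus_INR, mult_INR; simpl INR; field. }
  assert (hS2 : sin (N * t) ^2 = cos (N * (PI/2 - t)) ^2).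
  { rewrite hNt, sin_add_mult_PI_sqr, sin_shift; reflexivity. }
  assert (hSC : sin (N * t) * cos (N * t) = sin (N * (PI/2 - t)) * cos (N * (PI/2 - t))).
  { rewrite hNt, sin_mul_cos_add_mult_PI, sin_shift, cos_shift; field. }
  unfold phi_kernel; rewrite sin_shift, cos_shift, <- hS2.
  replace (3 * sin t * sin (N * (PI/2 - t)) * cos (N * (PI/2 - t)))
    with (3 * sin t * (sin (N * t) * cos (N * t))) by (rewrite hSC; field).
  replace (N * (2 * t)) with (2 * (N * t)) by field.
  replace ((2 * N - 1) * t) with (2 * (N * t) - t) by field.
  replace (3 * t) with (2 * t + t) by field.
  rewrite cos_plus, cos_minus, !cos_2a, !sin_2a.
  pose proof (sin2_cos2 t) as ht; pose proof (sin2_cos2 (N * t)) as hNt2; unfold Rsqr in *.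
  apply Rminus_diag_uniq.
  transitivity (N * cos t * (sin t * sin t + cos t * cos t - 1)
                - N * cos t * (sin (N * t) * sin (N * t) + cos (N * t) * cos (N * t) - 1)).
  - field; exact hN.
  - rewrite ht, hNt2; ring.
Qed.

Theorem lemma1 (n : nat) (hn : (3 <= n)%nat) (hodd : Nat.Odd n) (x : R)
  (hx0 : 0 <= x) (hxpi : x <= PI) : 0 <= phi n x.
Proof.
  destruct (Rle_lt_or_eq_dec 0 x hx0) as [hx | <-].
  2: { unfold phi; rewrite sum_range_sin_0, !Rmult_0_r, sin_0; lra. }
  assert (hN : 3 <= INR n) by (replace 3 with (INR 3) by (simpl; field); apply le_INR; exact hn).
  assert (hsin : 0 < sin (x/2)) by (apply sin_gt_0; lra).
  assert (hK : 0 <= phi_kernel (INR n) (PI/2 - x/2)) by (apply phi_kernel_nonneg; lra).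
  rewrite <- phi_kernel_identity in hK by assumption.
  apply (Rmult_le_reg_l (INR n * (2 * sin (x/2)))); [nra |].
  rewrite Rmult_0_r, Rmult_assoc; exact hK.
Qed.
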